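(* There are absolute constants $\varepsilon_0>0$ and $c_0>0$ such that, if $k\le\varepsilon_0n$, then \[ \pi(\mathcal G_{\mathrm{tr}}^c)\le e^{-c_0n}\quad\text{and}\quad\mu(\mathcal G_{\mathrm{tr}}^c)\le e^{-c_0n}. \]
   Context: $V=\mathbb F_2^k$ ($k\ge1$), $\mathrm{St}(n,k)=\{(z_1,\dots,z_n)\in V^n:\operatorname{span}(z_1,\dots,z_n)=V\}$, $\pi$ is the uniform measure on $\mathrm{St}(n,k)$ and $\mu$ the uniform measure on $V^n$. For $\xi\in V^*$, $\chi_\xi(u)=(-1)^{\xi(u)}$, $S_\xi(z)=\sum_{i=1}^n\chi_\xi(z_i)$, and $\mathcal G_{\mathrm{tr}}=\{z\in\mathrm{St}(n,k):\max_{0\ne\xi\in V^*}|S_\xi(z)|\le n/4\}$. Complements: $\pi(\mathcal G^c_{\mathrm{tr}})=1-\pi(\mathcal G_{\mathrm{tr}})$, $\mu(\mathcal G^c_{\mathrm{tr}})=1-\mu(\mathcal G_{\mathrm{tr}})$. *)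

From HB Require Import structures.
From mathcomp Require Import all_boot all_order all_algebra.
From mathcomp Require Import all_classical all_reals all_analysis.
Set Implicit Arguments. Unset Strict Implicit. Unset Printing Implicit Defensive.
Import Order.TTheory GRing.Theory Num.Theory.
Local Open Scope ring_scope.

Definition config (n k : nat) := {ffun 'I_n -> 'rV['F_2]_k}.

Definition spans n k (z : config n k) : bool :=
  row_full (\matrix_(i < n, j < k) z i 0 j).

Definition St n k : {set config n k} := [set z | spans z].

(* A linear functional xi in V^* is represented by a column vector: xi(u) = u *m xi. *)
Definition chi k (xi : 'cV['F_2]_k) (u : 'rV['F_2]_k) : int :=
  if (u *m xi) 0 0 == 0 then 1 else -1.

Definition Ssum n k (xi : 'cV['F_2]_k) (z : config n k) : int :=
  \sum_(i < n) chi xi (z i).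

Definition Gtr n k : {set config n k} :=
  [set z in St n k | [forall xi : 'cV['F_2]_k,
      (xi != 0) ==> (4 * `|Ssum xi z| <= (n%:Z))]].

(* pi = uniform measure on St(n,k); mu = uniform measure on V^n. *)
Definition pi_Gtr_c (R : realType) n k : R :=
  1 - (#|Gtr n k|%:R / #|St n k|%:R).
Definition mu_Gtr_c (R : realType) n k : R :=
  1 - (#|Gtr n k|%:R / #|{: config n k}|%:R).

(* Chernoff bound plus union bound over the functionals.  For xi <> 0 the
   signs chi_xi(u) are balanced on V, so the exponential moment
   sum_z b^(S_xi z) factorises as (|V| (b + 1/b) / 2)^n.  A configuration
   outside G_tr either does not span, and then some xi <> 0 has S_xi = n, or
   has |S_xi| > n/4 for some xi <> 0; in both cases a^n <= b^S + b^(-S) for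
   b = a^4 and a >= 1.  Summing over the 2^k functionals gives
   mu(G_tr^c) <= 2^(k+1) ((a^4 + a^-4) / (2a))^n, and the ratio is at most
   199/200 for a = 21/20.  Finally pi(G_tr^c) <= mu(G_tr^c) as G_tr is
   contained in St(n,k). *)

Set Warnings "-notation-overridden,-ambiguous-paths,-notation-incompatible-prefix".
From HB Require Import structures.
From mathcomp Require Import all_boot all_order all_algebra.
From mathcomp Require Import all_classical all_reals all_analysis.
From mathcomp Require Import zify ring lra.
Import Order.TTheory GRing.Theory Num.Theory.
Local Open Scope ring_scope.
Set Implicit Arguments. Unset Strict Implicit. Unset Printing Implicit Defensive.

Section Characters.
Variables (k : nat) (xi : 'cV['F_2]_k).

Lemma chi_pm1 u : chi xi u = 1 \/ chi xi u = -1.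
Proof. by rewrite /chi; case: ifP; [left | right]. Qed.

Lemma chiD u v : chi xi (u + v) = chi xi u * chi xi v.
Proof.
rewrite /chi mulmxDl mxE.
by case: ((u *m xi) 0 0) => [[|[|]]] //= ?; case: ((v *m xi) 0 0) => [[|[|]]].
Qed.

Lemma chi_shift : xi != 0 -> exists e, forall u, chi xi (u + e) = - chi xi u.
Proof.
case/cV0Pn=> j xij_neq0; exists (delta_mx 0 j) => u.
by rewrite chiD {2}/chi -rowE mxE (negbTE xij_neq0) mulrN1.
Qed.

Lemma sum_chi_balanced (M : nmodType) (F : int -> M) : xi != 0 ->
  (\sum_u F (chi xi u)) *+ 2 = (F 1 + F (-1)) *+ #|{: 'rV['F_2]_k}|.
Proof.
case/chi_shift=> e chi_e; rewrite mulr2n {2}(reindex_inj (addIr e)) /=.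
rewrite -big_split -sumr_const; apply: eq_bigr => u _; rewrite chi_e.
by case: (chi_pm1 u) => ->; rewrite ?opprK // addrC.
Qed.

End Characters.

Section ExponentialMoment.
Variables (R : numFieldType) (n k : nat) (xi : 'cV['F_2]_k).

Lemma prod_exprz_chi (b : R) (z : config n k) : b != 0 ->
  \prod_i b ^ chi xi (z i) = b ^ Ssum xi z.
Proof.
by move=> b_neq0; rewrite /Ssum (big_morph _ (fun s t => expfzDr s t b_neq0) (expr0z b)).
Qed.

Lemma sum_exprz_chi (b : R) : xi != 0 ->
  \sum_u b ^ chi xi u = #|{: 'rV['F_2]_k}|%:R * ((b + b^-1) / 2).
Proof.
move=> /(sum_chi_balanced (fun s => b ^ s)) balanced.
have two_neq0 : (2 : R) != 0 by rewrite pnatr_eq0.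
apply: (mulIf two_neq0); rewrite mulr_natr balanced expr1z exprN1.
by rewrite -[LHS]mulr_natl -mulrA mulfVK.
Qed.

Lemma sum_exprz_Ssum (b : R) : xi != 0 -> b != 0 ->
  \sum_(z : config n k) b ^ Ssum xi z = (#|{: 'rV['F_2]_k}|%:R * ((b + b^-1) / 2)) ^+ n.
Proof.
move=> xi_neq0 b_neq0.
rewrite (eq_bigr _ (fun z _ => esym (prod_exprz_chi z b_neq0))).
rewrite -(bigA_distr_bigA (fun _ u => b ^ chi xi u)) /=.
by rewrite (eq_bigr _ (fun i _ => sum_exprz_chi b xi_neq0)) prodr_const card_ord.
Qed.

End ExponentialMoment.

Lemma exprn_le_exprzDV (R : realFieldType) (a : R) (n : nat) (s : int) :
  1 <= a -> n%:Z <= 4 * `|s| -> a ^+ n <= (a ^+ 4) ^ s + (a ^+ 4)^-1 ^ s.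
Proof.
move=> a_ge1 n_le; have a4_gt0 : 0 < a ^+ 4 by rewrite exprn_gt0 // (lt_le_trans ltr01).
have le_abs : a ^+ n <= (a ^+ 4) ^ `|s|.
  by rewrite !exprnP exprz_exp ler_weXz2l.
move: le_abs; have [s_ge0 le_abs | s_lt0 le_abs] := ger0P s.
  by rewrite (le_trans le_abs) // lerDl exprz_ge0 // invr_ge0 ltW.
by rewrite exprz_inv (le_trans le_abs) // lerDr exprz_ge0 // ltW.
Qed.

Lemma nonspanning_annihilator n k (z : config n k) : ~~ spans z ->
  exists2 xi : 'cV['F_2]_k, xi != 0 & forall i, chi xi (z i) = 1.
Proof.
set M := \matrix_(i, j) z i 0 j => M_not_full.
have /matrix0Pn [l [j Clj_neq0]] : cokermx M != 0.
  by rewrite -mxrank_eq0 mxrank_coker subn_eq0 -ltnNge ltn_neqAle M_not_full rank_leq_col.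
exists (col j (cokermx M)); first by apply/cV0Pn; exists l; rewrite mxE.
move=> i; have -> : z i = row i M by apply/rowP => l'; rewrite !mxE.
by rewrite /chi colE mulmxA -row_mul mulmx_coker row0 mul0mx mxE eqxx.
Qed.

Lemma Gtr_compl_deviation n k (z : config n k) : z \notin Gtr n k ->
  exists2 xi : 'cV['F_2]_k, xi != 0 & n%:Z <= 4 * `|Ssum xi z|.
Proof.
rewrite inE negb_and => /orP [].
  rewrite inE => /nonspanning_annihilator [xi xi_neq0 chi1]; exists xi => //.
  rewrite /Ssum (eq_bigr _ (fun i _ => chi1 i)) sumr_const card_ord natz.
  by rewrite normr_nat; lia.
case/forallPn => xi; rewrite negb_imply -ltNge => /andP [xi_neq0 /ltW dev].
by exists xi.
Qed.

Lemma card_Gtr_compl_le (R : realFieldType) (a : R) n k : 1 <= a ->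
  #|~: Gtr n k|%:R * a ^+ n <=
  2 ^+ k.+1 * (#|{: 'rV['F_2]_k}|%:R * ((a ^+ 4 + (a ^+ 4)^-1) / 2)) ^+ n.
Proof.
move=> a_ge1; set b := a ^+ 4; set X := (_ * _) ^+ n.
have b_gt0 : 0 < b by rewrite exprn_gt0 // (lt_le_trans ltr01).
have X_ge0 : 0 <= X by rewrite exprn_ge0 // mulr_ge0 // divr_ge0 // addr_ge0 // ltW ?invr_gt0.
pose w (xi : 'cV['F_2]_k) (z : config n k) := b ^ Ssum xi z + b^-1 ^ Ssum xi z.
have w_ge0 xi z : 0 <= w xi z by rewrite addr_ge0 // exprz_ge0 // ltW ?invr_gt0.
pose W (z : config n k) := \sum_(xi : 'cV['F_2]_k | xi != 0) w xi z.
have W_ge0 z : 0 <= W z by apply: sumr_ge0.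
have tail z : z \in ~: Gtr n k -> a ^+ n <= W z.
  rewrite inE => /Gtr_compl_deviation [xi xi_neq0 dev].
  rewrite /W (bigD1 xi) //= (le_trans (exprn_le_exprzDV a_ge1 dev)) // lerDl.
  exact: sumr_ge0.
have sum_W : \sum_z W z = \sum_(xi : 'cV['F_2]_k | xi != 0) 2 * X.
  rewrite exchange_big; apply: eq_bigr => xi xi_neq0 /=.
  rewrite big_split /= !sum_exprz_Ssum ?invr_eq0 ?gt_eqF // invrK [b^-1 + b]addrC.
  by rewrite -/X mulr2n; ring.
rewrite mulr_natl -sumr_const; apply: le_trans (ler_sum _ tail) _.
apply: (@le_trans _ _ (\sum_z W z)).
  by rewrite [leRHS](bigID (mem (~: Gtr n k))) /= lerDl sumr_ge0.
rewrite sum_W; apply: (@le_trans _ _ (\sum_(xi : 'cV['F_2]_k) 2 * X)).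
  by rewrite [leRHS](bigID (fun xi => xi != 0)) /= lerDl sumr_ge0 // => xi _; rewrite mulr_ge0.
by rewrite sumr_const card_mx card_Fp // muln1 -(mulr_natr (2 * X)) natrX exprS; lra.
Qed.

Lemma mu_Gtr_c_le (R : realType) (a : R) n k : 1 <= a ->
  mu_Gtr_c R n k <= 2 ^+ k.+1 * ((a ^+ 4 + (a ^+ 4)^-1) / (2 * a)) ^+ n.
Proof.
move=> a_ge1; have an_gt0 : 0 < a ^+ n by rewrite exprn_gt0 // (lt_le_trans ltr01).
have a_neq0 : a != 0 by rewrite gt_eqF // (lt_le_trans ltr01).
set T : R := #|{: config n k}|%:R.
have T_gt0 : 0 < T by rewrite ltr0n; apply/card_gt0P; exists [ffun=> 0].
have T_def : T = #|{: 'rV['F_2]_k}|%:R ^+ n by rewrite /T card_ffun card_ord natrX.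
have mu_def : mu_Gtr_c R n k = #|~: Gtr n k|%:R / T.
  have T_split : T = #|Gtr n k|%:R + #|~: Gtr n k|%:R by rewrite /T -natrD cardsC.
  rewrite /mu_Gtr_c -/T; apply: (mulIf (lt0r_neq0 T_gt0)).
  by rewrite mulrBl mul1r !mulfVK ?lt0r_neq0 // {1}T_split addrAC subrr add0r.
rewrite mu_def ler_pdivrMr // -(ler_pM2r an_gt0).
apply: le_trans (card_Gtr_compl_le _ _ a_ge1) _.
set V : R := #|{: 'rV['F_2]_k}|%:R in T_def *.
have base : V * ((a ^+ 4 + (a ^+ 4)^-1) / 2) = (a ^+ 4 + (a ^+ 4)^-1) / (2 * a) * (V * a).
  by field.
by rewrite T_def -!mulrA -exprMn base !exprMn.
Qed.

Lemma card_ratio_le_subset (R : numFieldType) (T : finType) (A B : {set T}) :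
  A \subset B -> #|A|%:R / #|T|%:R <= #|A|%:R / #|B|%:R :> R.
Proof.
move=> sAB; have [B0 | B_gt0] := posnP #|B|.
  have /eqP -> : #|A| == 0%N by rewrite -leqn0 -B0 subset_leq_card.
  by rewrite !mul0r.
rewrite ler_wpM2l // lef_pV2 ?posrE ?ltr0n ?ler_nat ?max_card //.
by rewrite (leq_trans B_gt0) ?max_card.
Qed.

Lemma pi_Gtr_c_le_mu (R : realType) n k : pi_Gtr_c R n k <= mu_Gtr_c R n k.
Proof.
rewrite /pi_Gtr_c /mu_Gtr_c lerD2l lerN2 card_ratio_le_subset //.
by apply/fintype.subsetP => z; rewrite inE => /andP [].
Qed.

Lemma cosh_ratio_le (R : realFieldType) :
  0 <= ((21 / 20 : R) ^+ 4 + ((21 / 20) ^+ 4)^-1) / (2 * (21 / 20)) <= 199 / 200.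
Proof.
set A := (21 / 20 : R) ^+ 4.
have A_ge : 6 / 5 <= A by rewrite /A (exprM _ 2 2) !expr2; lra.
have A_le : A <= 5 / 4 by rewrite /A (exprM _ 2 2) !expr2; lra.
have Ainv_ge0 : 0 <= A^-1 by rewrite invr_ge0; lra.
have Ainv_le : A^-1 <= 5 / 6 by rewrite -[5 / 6]invf_div lef_pV2 ?posrE //; lra.
by apply/andP; split; lra.
Qed.

Lemma two_pow_mul_le_expR (R : realType) (r : R) k n :
  0 <= r <= 199 / 200 -> (1 <= k)%N -> k%:R <= 1 / 1000 * n%:R :> R ->
  2 ^+ k.+1 * r ^+ n <= expR (- (1 / 1000 * n%:R)).
Proof.
move=> /andP [r_ge0 r_le] k_ge1 k_le.
have two_le : (2 : R) ^+ k.+1 <= expR (k.+1%:R * 1).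
  rewrite expRM_natl lerXn2r ?nnegrE ?expR_ge0 //.
  by have := expR_ge1Dx (1 : R); lra.
have r_pow_le : r ^+ n <= expR (n%:R * (- 1 / 200)).
  rewrite expRM_natl lerXn2r ?nnegrE ?expR_ge0 //.
  by have := expR_ge1Dx (- 1 / 200 : R); lra.
apply: le_trans (ler_pM _ _ two_le r_pow_le) _; rewrite ?exprn_ge0 //.
rewrite -expRD ler_expR mulr1 -addn1 natrD.
have : (1 : R) <= k%:R by rewrite ler1n.
have := ler0n R n; lra.
Qed.

Theorem lemma3p1 (R : realType) :
  exists eps0 c0 : R, 0 < eps0 /\ 0 < c0 /\
    forall n k : nat, (1 <= k)%N -> k%:R <= eps0 * n%:R ->
      pi_Gtr_c R n k <= expR (- (c0 * n%:R)) /\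
      mu_Gtr_c R n k <= expR (- (c0 * n%:R)).
Proof.
exists (1 / 1000), (1 / 1000); do 2![split; first lra] => n k k_ge1 k_le.
have mu_le : mu_Gtr_c R n k <= expR (- (1 / 1000 * n%:R)).
  have a_ge1 : 1 <= 21 / 20 :> R by lra.
  exact: le_trans (mu_Gtr_c_le n k a_ge1) (two_pow_mul_le_expR (cosh_ratio_le R) k_ge1 k_le).
by split; first exact: le_trans (pi_Gtr_c_le_mu R n k) mu_le.
Qed.
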